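(* Fix integers $k \ge 3$ and $i \in \{2,\dots,k-1\}$, and let $T = \{1,\dots,k\}\setminus\{i\} \subset \mathbb{Z}$. There exists a number $\ell \ge 1$ such that for any set $C$ with $|C| \ge \ell$ there is a set $X \subset \mathbb{Z} \times C$ satisfying: (a) $X$ is a union of pairwise disjoint sets of the form $(T+n)\times\{c\}$ with $n \in \mathbb{Z}$ and $c \in C$; (b) $|(\{n\}\times C)\cap X| \equiv 1 \pmod{k-1}$ for every $n \in \mathbb{Z}$. *)

From mathcomp Require Import all_boot all_order all_algebra.
Set Implicit Arguments. Unset Strict Implicit. Unset Printing Implicit Defensive.
Import Order.TTheory GRing.Theory Num.Theory.

Local Open Scope ring_scope.

Definition inT (k i : nat) (t : int) : Prop :=
  (1 <= t)%R /\ (t <= k%:Z)%R /\ t <> i%:Z.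

(* A subset X of Z x C is represented by its columns: X n = {c | (n,c) \in X}.
   A family of tiles (T+n) x {c} is represented by P : int -> {set C}
   (c \in P n  <=>  the tile (T+n) x {c} is used). *)

Definition tiled_by (k i : nat) (C : finType) (X P : int -> {set C}) : Prop :=
  (forall (m : int) (c : C),
      c \in X m <-> exists n : int, c \in P n /\ inT k i (m - n)%R) /\
  (forall (c : C) (n n' : int), c \in P n -> c \in P n' -> n <> n' ->
      forall m : int, ~ (inT k i (m - n)%R /\ inT k i (m - n')%R)).

Definition columns_ok (k : nat) (C : finType) (X : int -> {set C}) : Prop :=
  forall n : int, #|X n| = 1 %[mod k.-1].

From mathcomp Require Import all_boot all_order all_algebra zify.
Import Order.TTheory GRing.Theory Num.Theory.
Set Implicit Arguments. Unset Strict Implicit. Unset Printing Implicit Defensive.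
Local Open Scope ring_scope.

(* Pick k(k-1) elements of C and label them (r, j) with r in Z/k and j < k-1;
   use the tile (T+n) x {(r, j)} exactly when r = n (mod k) and j < a n.
   Two tiles in the same row (r, j) are then translates of T by a nonzero
   multiple of k, hence disjoint since T has diameter k-1, and the column at m
   has exactly sum_(t in T) a (m - t) elements.  So it suffices to find
   a : Z -> {0, ..., k-2} with sum_(t in T) a (m - t) = 1 (mod k-1) for all m,
   and we reduce mod k-1 an integer solution f of sum_(t in T) f (m - t) = 1.
   Because both 1 and k lie in T, this recurrence can be solved for f (m - 1)
   going up and for f (m - k) going down, starting from f = 0 on
   {0, ..., k-2}; the downward solution is the upward one for the reflected
   set k+1-T. *)

Section StrongRecursion.

Variables (A : Type) (a0 : A) (step : nat -> (nat -> A) -> A).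

Hypothesis step_ext :
  forall n g h, (forall m, (m < n)%N -> g m = h m) -> step n g = step n h.

Fixpoint srec_fuel (fuel n : nat) : A :=
  if fuel is fuel'.+1 then step n (srec_fuel fuel') else a0.

Definition srec (n : nat) : A := srec_fuel n.+1 n.

Lemma srec_fuel_eq fuel fuel' n :
  (n < fuel)%N -> (n < fuel')%N -> srec_fuel fuel n = srec_fuel fuel' n.
Proof.
elim: fuel fuel' n => [//|fuel IH] [//|fuel'] n /= lt_n_fuel lt_n_fuel'.
by apply: step_ext => m lt_mn; apply: IH; apply: leq_trans lt_mn _.
Qed.

Lemma srecE n : srec n = step n srec.
Proof. by apply: step_ext => m lt_mn; apply: srec_fuel_eq. Qed.

End StrongRecursion.

Section ForwardSolution.

Variables (k : nat) (T : pred nat).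

Definition fwd_step (n : nat) (g : nat -> int) : int :=
  if (n < k.-1)%N then 0 else 1 - \sum_(2 <= t < k.+1 | T t) g (n.+1 - t)%N.

Definition fwd_sol : nat -> int := srec 0 fwd_step.

Lemma fwd_solE n : fwd_sol n = fwd_step n fwd_sol.
Proof.
apply: srecE => {}n g h eq_gh; rewrite /fwd_step.
case: ltnP => // le_k1n; congr (1 - _).
by apply: congr_big_nat => // t /andP[_ t_range]; rewrite eq_gh //; lia.
Qed.

Lemma fwd_sol_small n : (n < k.-1)%N -> fwd_sol n = 0.
Proof. by rewrite fwd_solE /fwd_step => ->. Qed.

Hypotheses (k_gt0 : (0 < k)%N) (T1 : T 1%N).

Lemma fwd_sol_eq m : (k <= m)%N -> \sum_(1 <= t < k.+1 | T t) fwd_sol (m - t) = 1.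
Proof.
move=> le_km; rewrite big_ltn_cond // T1 fwd_solE /fwd_step ifN; last by lia.
have -> : (m - 1).+1 = m by lia.
by rewrite subrK.
Qed.

End ForwardSolution.

Section TwoSidedSolution.

Variables (k : nat) (T : pred nat).
Hypotheses (k_gt1 : (1 < k)%N) (T1 : T 1%N) (Tk : T k).

Let F := fwd_sol k T.
Let F' := fwd_sol k (fun t => T (k.+1 - t)%N).

Definition two_sided_sol (z : int) : int :=
  if 0 <= z then F (absz z) else F' (absz (k%:Z - 2 - z)%R).

Lemma two_sided_sol_reflect z :
  z <= k%:Z - 2 -> two_sided_sol z = F' (absz (k%:Z - 2 - z)%R).
Proof.
rewrite /two_sided_sol; case: ifP => // z_ge0 le_z_k2.
rewrite /F /F' !fwd_sol_small //; lia.
Qed.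

Lemma two_sided_sol_eq m : \sum_(1 <= t < k.+1 | T t) two_sided_sol (m - t%:Z) = 1.
Proof.
have [le_km | lt_mk] := lerP k%:Z m.
  rewrite -(@fwd_sol_eq k T (ltnW k_gt1) T1 (absz m)); last by lia.
  apply: congr_big_nat => // t /andP[_ /andP[t_ge1 t_lek]].
  by rewrite /two_sided_sol ifT; [congr fwd_sol|]; lia.
have Tr1 : T (k.+1 - 1)%N by rewrite subn1.
rewrite -(@fwd_sol_eq k (fun t => T (k.+1 - t)%N) (ltnW k_gt1) Tr1
            (absz (2 * k%:Z - 1 - m)%R)); last by lia.
rewrite big_nat_rev; apply: congr_big_nat => // t /andP[_ /andP[t_ge1 t_lek]].
by rewrite two_sided_sol_reflect; [congr fwd_sol|]; lia.
Qed.

End TwoSidedSolution.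

Lemma modz_sum (I : Type) (r : seq I) (P : pred I) (F : I -> int) (d : int) :
  (\sum_(j <- r | P j) (F j %% d)%Z = \sum_(j <- r | P j) F j %[mod d])%Z.
Proof. by apply/eqP; elim/big_rec2: _ => // j m n _; rewrite modzDml eqz_modDl. Qed.

Lemma exists_weights_mod (k : nat) (T : pred nat) :
  (1 < k)%N -> T 1%N -> T k ->
  exists a : int -> nat, (forall n, a n < k.-1)%N /\
    forall m : int, (\sum_(1 <= t < k.+1 | T t) a (m - t%:Z)%R = 1 %[mod k.-1])%N.
Proof.
move=> k_gt1 T1 Tk; have d_gt0 : 0 < k.-1%:Z by rewrite ltz_nat; lia.
pose f := two_sided_sol k T.
exists (fun z => absz (f z %% k.-1)%Z); split=> [n | m].
  by have := ltz_pmod (f n) d_gt0; have := modz_ge0 (f n) (lt0r_neq0 d_gt0); lia.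
apply/eqP; rewrite -eqz_nat -!modz_nat.
rewrite -[X in (_ == X %[mod _])%Z](two_sided_sol_eq k_gt1 T1 Tk m) -modz_sum.
rewrite -[X in (X == _ %[mod _])%Z]natz natr_sum; apply/eqP; congr (_ %% _)%Z.
by apply: eq_bigr => t _; rewrite natz gez0_abs // modz_ge0 // lt0r_neq0.
Qed.

Lemma eq_of_eqz_mod_small (d m n : int) :
  (m = n %[mod d])%Z -> (`|m - n| < `|d|)%N -> m = n.
Proof.
move=> /eqP; rewrite eqz_mod_dvd dvdzE => dvd_mn lt_mn.
apply/eqP; rewrite -subr_eq0 -absz_eq0; apply: contraTT lt_mn => nz_mn.
by rewrite -leqNgt dvdn_leq // lt0n.
Qed.

Lemma card_bigcup_disjoint (T J : finType) (P : pred J) (F : J -> {set T}) :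
  {in P &, forall j j', j != j' -> [disjoint F j & F j']} ->
  #|\bigcup_(j | P j) F j| = (\sum_(j | P j) #|F j|)%N.
Proof.
move=> disjF; rewrite -sum1_card big_mkcond /=.
transitivity (\sum_(x : T) \sum_(j | P j) (x \in F j : nat))%N.
  apply: eq_bigr => x _; case: (boolP (x \in _)) => [/bigcupP[j0 Pj0 Fj0x] | notFx].
    rewrite (bigD1 j0) //= Fj0x big1 // => j /andP[Pj neq_jj0].
    by rewrite (disjointFl (disjF _ _ Pj Pj0 neq_jj0) Fj0x).
  rewrite big1 // => j Pj; apply/eqP; rewrite eqb0.
  by apply: contraNN notFx => Fjx; apply/bigcupP; exists j.
rewrite exchange_big; apply: eq_bigr => j _.
by rewrite -sum1_card [RHS]big_mkcond; apply: eq_bigr => x _; case: (x \in F j).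
Qed.

Lemma exists_inj_of_leq_card (A B : finType) :
  (#|A| <= #|B|)%N -> exists f : A -> B, injective f.
Proof.
move=> le_AB; exists (fun x => enum_val (widen_ord le_AB (enum_rank x))).
by move=> x y /enum_val_inj /(congr1 val) /= /val_inj /enum_rank_inj.
Qed.

Section Tiling.

Variables (k d : nat) (C : finType) (phi : 'I_k * 'I_d -> C) (a : int -> nat).
Hypotheses (k_gt0 : (0 < k)%N) (phi_inj : injective phi) (a_le : forall n, (a n <= d)%N).

Let kZ_gt0 : 0 < k%:Z. Proof. by rewrite ltz_nat. Qed.

Let modk_ge0 n : 0 <= (n %% k)%Z. Proof. exact/modz_ge0/lt0r_neq0. Qed.

Lemma absz_modz_lt (n : int) : (absz (n %% k)%Z < k)%N.
Proof. by have := ltz_pmod n kZ_gt0; have := modk_ge0 n; lia. Qed.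

Definition residue (n : int) : 'I_k := Ordinal (absz_modz_lt n).

Definition tile_set (n : int) : {set C} :=
  [set phi (residue n, widen_ord (a_le n) j) | j : 'I_(a n)].

Definition column_set (i : nat) (m : int) : {set C} :=
  \bigcup_(t < k.+1 | (t != i :> nat) && (1 <= t)%N) tile_set (m - t%:Z).

Lemma card_tile_set n : #|tile_set n| = a n.
Proof. by rewrite card_imset ?card_ord // => j j' /phi_inj [] /val_inj. Qed.

Lemma eq_of_tile_sets_meet n n' c :
  c \in tile_set n -> c \in tile_set n' -> (`|n - n'| < k)%N -> n = n'.
Proof.
move=> /imsetP[j _ ->] /imsetP[j' _ /phi_inj [eq_res _]] lt_nn'.
apply: (eq_of_eqz_mod_small (d := k)) => //.
by have := modk_ge0 n; have := modk_ge0 n'; lia.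
Qed.

Lemma column_set_tiled i : tiled_by k i (column_set i) tile_set.
Proof.
split=> [m c | c n n' cn cn' neq_nn' m [[n_lo [n_hi _]] [n'_lo [n'_hi _]]]]; last first.
  by apply: neq_nn'; apply: (eq_of_tile_sets_meet cn cn'); lia.
split=> [/bigcupP[t /andP[/eqP t_neq_i t_ge1] ct] | [n [cn [lo [hi n_neq_i]]]]].
  by exists (m - t%:Z); split=> //; have := ltn_ord t; rewrite /inT; lia.
have lt_mn : (absz (m - n) < k.+1)%N by lia.
apply/bigcupP; exists (Ordinal lt_mn).
  by rewrite /=; apply/andP; split; [apply/eqP|]; lia.
by have -> : m - (Ordinal lt_mn : nat)%:Z = n by rewrite /=; lia.
Qed.

Lemma card_column_set i m :
  #|column_set i m| = (\sum_(t < k.+1 | (t != i :> nat) && (1 <= t)%N) a (m - t%:Z))%N.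
Proof.
rewrite card_bigcup_disjoint; first by apply: eq_bigr => t _; apply: card_tile_set.
move=> t t' /andP[_ t_ge1] /andP[_ t'_ge1] neq_tt'.
rewrite disjoint_subset; apply/subsetP => c ct; rewrite inE; apply/negP => ct'.
have lt_t := ltn_ord t; have lt_t' := ltn_ord t'.
have eq_tt' : m - t%:Z = m - t'%:Z by apply: (eq_of_tile_sets_meet ct ct'); lia.
by apply/negP: neq_tt'; rewrite negbK -val_eqE /=; apply/eqP; lia.
Qed.

End Tiling.

Theorem lemma7 (k i : nat) (hk : (3 <= k)%N) (hi1 : (2 <= i)%N) (hi2 : (i <= k.-1)%N) :
  exists l : nat, (1 <= l)%N /\
    forall C : finType, (l <= #|C|)%N ->
      exists X P : int -> {set C}, tiled_by k i X P /\ columns_ok k X.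
Proof.
exists (k * k.-1)%N; split=> [|C le_C]; first by rewrite muln_gt0; lia.
have k_gt0 : (0 < k)%N by lia.
have [a [a_lt a_sum]] :=
  @exists_weights_mod k (fun t => t != i) ltac:(lia) ltac:(lia) ltac:(lia).
have a_le n : (a n <= k.-1)%N := ltnW (a_lt n).
have [phi phi_inj] : exists phi : 'I_k * 'I_k.-1 -> C, injective phi.
  by apply: exists_inj_of_leq_card; rewrite card_prod !card_ord.
exists (column_set phi k_gt0 a_le i), (tile_set phi k_gt0 a_le); split.
  exact: column_set_tiled.
by move=> m; rewrite card_column_set; have := a_sum m; rewrite big_geq_mkord.
Qed.
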